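(* Let $n\ge1$ and let $c\in\mathfrak{S}_{n+1}$ be a Coxeter element. For every $\boldsymbol\pi=(\pi^k)_{1\le k\le n}\in\mathcal{ST}(c)$ and every $1\le k\le n$, \[\ell(\pi^k)\leqslant\min\bigl(\#\{i\in\mathbf L_c\cup\{1\}:i\leqslant k\},\ \#\{j\in\mathbf R_c\cup\{n+1\}:j>k\}\bigr).\]
   Context: $\ell(\pi)$ is the number of nonzero parts of a partition $\pi$. Coxeter element of $\mathfrak{S}_{n+1}$: product of $s_1,\dots,s_n$ ($s_i=(i,i+1)$), each exactly once; it is a long cycle $(c_1=1<c_2<\dots<c_m=n+1>c_{m+1}>\dots>c_{n+1})$, with $\mathbf L_c=\{c_2,\dots,c_{m-1}\}$, $\mathbf R_c=\{c_{m+1},\dots,c_{n+1}\}$. Storability: a pair of partitions $(\lambda,\mu)$ (padded with zeros) is storable if $\lambda_i\ge\mu_i\ge\lambda_{i+1}$ for all $i\ge1$. A triple $(\lambda,\mu,\nu)$ is $(\boxplus,\boxplus)$-storable if $(\lambda,\mu)$ and $(\nu,\mu)$ are storable; $(\boxplus,\boxminus)$-storable if $(\lambda,\mu)$ and $(\mu,\nu)$ are; $(\boxminus,\boxplus)$-storable if $(\mu,\lambda)$ and $(\nu,\mu)$ are; $(\boxminus,\boxminus)$-storable if $(\mu,\lambda)$ and $(\mu,\nu)$ are. For $\boldsymbol\pi=(\pi^1,\dots,\pi^n)$ set $\pi^0=\pi^{n+1}=(0)$; $\boldsymbol\pi$ is $X$-storable at $i$ if $(\pi^{i-1},\pi^i,\pi^{i+1})$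 is $X$-storable. With $\mathbf L=\mathbf L_c\cup\{1\}$, $\mathbf R=\mathbf R_c\cup\{n+1\}$ and $\mathbf R[-1]=\{r-1:r\in\mathbf R\}$, $\boldsymbol\pi\in\mathcal{ST}(c)$ ($c$-storable) means that for each $i\in\{1,\dots,n\}$: $(\boxplus,\boxplus)$-storable at $i$ if $i\notin\mathbf L\cup\mathbf R[-1]$; $(\boxplus,\boxminus)$-storable at $i$ if $i\in\mathbf R[-1]\setminus\mathbf L$; $(\boxminus,\boxplus)$-storable at $i$ if $i\in\mathbf L\setminus\mathbf R[-1]$; $(\boxminus,\boxminus)$-storable at $i$ if $i\in\mathbf L\cap\mathbf R[-1]$; and $\pi^k=(0)$ for $k\notin\{\min\mathbf L,\dots,\max\mathbf R\}$. *)

From mathcomp Require Import all_boot all_order all_fingroup.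
Set Implicit Arguments. Unset Strict Implicit. Unset Printing Implicit Defensive.

(* Points 1..n+1 of S_{n+1} are encoded as ordinals 0..n of 'I_(n.+1):
   the value v (1 <= v <= n+1) is the ordinal inord v.-1. *)

Local Open Scope group_scope.

Definition simple_tr (n i : nat) : 'S_(n.+1) :=
  tperm (inord i.-1 : 'I_(n.+1)) (inord i).

Definition coxeter_element (n : nat) (c : 'S_(n.+1)) : Prop :=
  exists w : seq nat, perm_eq w (iota 1 n) /\ c = \prod_(i <- w) simple_tr n i.

(* c is the long cycle (1 = c_1 < ... < c_m = n+1 > c_{m+1} > ... > c_{n+1});
   c_{j+1} = c^j(1).  L_c = {c_2,...,c_{m-1}}: the points v in 2..n visited by
   the orbit of 1 before n+1;  R_c = {c_{m+1},...}: those visited after n+1. *)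
Definition in_Lc (n : nat) (c : 'S_(n.+1)) (v : nat) : bool :=
  [&& 2 <= v, v <= n &
   [exists k : 'I_(n.+1), ((c ^+ k) ord0 == inord v.-1) &&
      [forall j : 'I_(n.+1), (j <= k)%N ==> ((c ^+ j) ord0 != ord_max)]]].

Definition in_Rc (n : nat) (c : 'S_(n.+1)) (v : nat) : bool :=
  [&& 2 <= v, v <= n &
   [exists k : 'I_(n.+1), ((c ^+ k) ord0 == inord v.-1) &&
      [exists j : 'I_(n.+1), (j < k)%N && ((c ^+ j) ord0 == ord_max)]]].

Local Close Scope group_scope.

Definition in_L (n : nat) (c : 'S_(n.+1)) (v : nat) : bool := (v == 1%N) || in_Lc c v.
Definition in_R (n : nat) (c : 'S_(n.+1)) (v : nat) : bool := (v == n.+1) || in_Rc c v.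
Definition in_Rm1 (n : nat) (c : 'S_(n.+1)) (i : nat) : bool := in_R c i.+1.

(* Partitions: weakly decreasing sequences of nats, padded with zeros via nth 0
   (part i of the paper, i >= 1, is nth 0 p i.-1). *)
Definition is_partition (p : seq nat) : bool := sorted geq p.
Definition plen (p : seq nat) : nat := count (fun x => 0 < x) p.
Definition part (p : seq nat) (i : nat) : nat := nth 0 p i.

Definition storable (lam mu : seq nat) : Prop :=
  forall i : nat, part mu i <= part lam i /\ part lam i.+1 <= part mu i.

Definition st_pp (l m r : seq nat) := storable l m /\ storable r m.
Definition st_pm (l m r : seq nat) := storable l m /\ storable m r.
Definition st_mp (l m r : seq nat) := storable m l /\ storable r m.
Definition st_mm (l m r : seq nat) := storable m l /\ storable m r.

Definition ext_fam (n : nat) (pi : nat -> seq nat) (k : nat) : seq nat :=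
  if (1 <= k <= n) then pi k else [::].

Definition c_storable (n : nat) (c : 'S_(n.+1)) (pi : nat -> seq nat) : Prop :=
  (forall k, 1 <= k <= n -> is_partition (pi k)) /\
  forall i, 1 <= i <= n ->
    let l := ext_fam n pi i.-1 in
    let m := ext_fam n pi i in
    let r := ext_fam n pi i.+1 in
    match in_L c i, in_Rm1 c i with
    | false, false => st_pp l m r
    | false, true  => st_pm l m r
    | true,  false => st_mp l m r
    | true,  true  => st_mm l m r
    end.

From mathcomp Require Import all_boot all_order all_fingroup.

(* If (lam, mu) is storable then mu has at most as many parts as lam and at
   most one part fewer.  In a c-storable family the triple condition at i thus
   lets the length grow by at most [i \in L] from pi^(i-1) to pi^i, and by at
   most [i+1 \in R] from pi^(i+1) to pi^i.  Telescoping from pi^0 = (0) and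
   from pi^(n+1) = (0) gives the two bounds. *)

Lemma plen_countE (p : seq nat) (N : nat) : size p <= N ->
  plen p = count (fun i => 0 < part p i) (iota 0 N).
Proof.
move=> leN; rewrite /plen -{1}(mkseq_nth 0 p) /mkseq count_map.
rewrite -(subnKC leN) iotaD count_cat add0n -[LHS]addn0; congr (_ + _).
apply/esym/eqP; rewrite -leqn0 leqNgt -has_count; apply/hasPn => i.
by rewrite mem_iota => /andP[le_pi _]; rewrite /part nth_default.
Qed.

Lemma plen_le_part (lam mu : seq nat) :
  (forall i, part mu i <= part lam i) -> plen mu <= plen lam.
Proof.
move=> le_part; set N := size mu + size lam.
rewrite (@plen_countE mu N) ?leq_addr // (@plen_countE lam N) ?leq_addl //.
by apply: sub_count => i /= /leq_trans; apply.
Qed.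

Lemma storable_plen (lam mu : seq nat) : storable lam mu -> plen mu <= plen lam.
Proof. by move=> st; apply: plen_le_part => i; case: (st i). Qed.

Lemma storable_plen_succ (lam mu : seq nat) :
  storable lam mu -> plen lam <= (plen mu).+1.
Proof.
case: lam => [|x lam] st //; rewrite [plen _]/= -[(plen mu).+1]add1n.
by apply: leq_add; [exact: leq_b1 | apply: plen_le_part => i; case: (st i)].
Qed.

Lemma storable_plen_le_add (b : bool) (lam mu : seq nat) :
  (if b then storable mu lam else storable lam mu) -> plen mu <= plen lam + b.
Proof.
case: b => st; first by rewrite addn1; apply: storable_plen_succ.
by rewrite addn0; apply: storable_plen.
Qed.

Lemma c_storableP (n : nat) (c : 'S_(n.+1)) (pi : nat -> seq nat) (i : nat) :
  c_storable c pi -> 1 <= i <= n ->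
  let l := ext_fam n pi i.-1 in
  let m := ext_fam n pi i in
  let r := ext_fam n pi i.+1 in
  (if in_L c i then storable m l else storable l m) /\
  (if in_R c i.+1 then storable m r else storable r m).
Proof.
move=> [_ st] /st /=; rewrite /in_Rm1.
by case: (in_L c i); case: (in_R c i.+1) => -[].
Qed.

Arguments c_storableP {n c pi i}.

Lemma leq_count_iota_l (a : nat -> nat) (b : pred nat) (k : nat) :
  a 0 = 0 -> (forall i, i < k -> a i.+1 <= a i + b i.+1) ->
  a k <= count b (iota 1 k).
Proof.
move=> a0; elim: k => [|k IHk] step; first by rewrite a0.
apply: leq_trans (step k (ltnSn k)) _.
rewrite -[X in iota 1 X]addn1 iotaD count_cat /= add1n addn0 leq_add2r.
by apply: IHk => i /ltnW; apply: step.
Qed.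

Lemma leq_count_iota_r (a : nat -> nat) (b : pred nat) (m k : nat) :
  k <= m -> a m = 0 -> (forall i, k <= i < m -> a i <= a i.+1 + b i.+1) ->
  a k <= count b (iota k.+1 (m - k)).
Proof.
move=> /subnK; move: (m - k) => d <- {m}.
elim: d k => [|d IHd] k am step; first by rewrite am.
apply: leq_trans (step k _) _; first by rewrite leqnn addSn ltnS leq_addl.
rewrite /= addnC leq_add2l; apply: IHd; first by rewrite addnS.
by move=> i /andP[lt_ki lt_id]; apply: step; rewrite ltnW //= addSnnS.
Qed.

Theorem proposition4p10 (n : nat) (c : 'S_(n.+1)) (pi : nat -> seq nat) :
  1 <= n -> coxeter_element c -> c_storable c pi ->
  forall k, 1 <= k <= n ->
    plen (pi k) <= minn (count (in_L c) (iota 1 k))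
                        (count (in_R c) (iota k.+1 (n.+1 - k))).
Proof.
move=> _ _ cst k /andP[k_ge1 k_len].
pose a j := plen (ext_fam n pi j).
have <- : a k = plen (pi k) by rewrite /a /ext_fam k_ge1 k_len.
rewrite leq_min; apply/andP; split.
  apply: leq_count_iota_l => // i lt_ik.
  have /(c_storableP cst)[st _] : 1 <= i.+1 <= n by rewrite /= (leq_trans lt_ik).
  exact: storable_plen_le_add st.
apply: leq_count_iota_r => [||i /andP[le_ki lt_in]]; first exact: leqW.
  by rewrite /a /ext_fam ltnn andbF.
have /(c_storableP cst)[_ st] : 1 <= i <= n by rewrite (leq_trans k_ge1).
exact: storable_plen_le_add st.
Qed.
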